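(* Let $\mathbb{K}$ be an arbitrary field and let $A$ be a two-dimensional simple evolution $\mathbb{K}$-algebra. Then $A$ is isomorphic to an algebra of exactly one of the following three types (all parameters are nonzero scalars of $\mathbb{K}$): \begin{itemize} \item type $\mathbf{II}^{0,2}_{\lambda}$: the evolution algebra with natural basis $\{e_1,e_2\}$ and structure matrix $\begin{pmatrix}0&\lambda\\ 1&0\end{pmatrix}$ (i.e. $e_1^2=e_2$, $e_2^2=\lambda e_1$), $\lambda\in\mathbb{K}^\times$; \item type $\mathbf{II}^{1,3}_{\lambda}$: structure matrix $\begin{pmatrix}1&\lambda\\ 1&0\end{pmatrix}$ (i.e. $e_1^2=e_1+e_2$, $e_2^2=\lambda e_1$), $\lambda\in\mathbb{K}^\times$; \item type $\mathbf{II}^{2,4}_{\lambda,\mu}$: structure matrix $\begin{pmatrix}1&\lambda\\ \mu&1\end{pmatrix}$ (i.e. $e_1^2=e_1+\mu e_2$, $e_2^2=\lambda e_1+e_2$), $\lambda,\mu\in\mathbb{K}^\times$ with $\lambda\mu\neq 1$. \end{itemize}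
   Context: An evolution algebra over a field $\mathbb{K}$ is a $\mathbb{K}$-algebra $A$ with a basis $\{e_1,\dots,e_n\}$ (a natural basis) such that $e_ie_j=0$ for all $i\neq j$. The structure matrix $(\omega_{ij})$ relative to this basis is defined by $e_i^2=\sum_{j}\omega_{ji}e_j$. A $\mathbb{K}$-algebra $A$ is simple if $A^2\neq 0$ and its only ideals are $0$ and $A$. *)

From HB Require Import structures.
From mathcomp Require Import all_boot all_order all_algebra.
Set Implicit Arguments. Unset Strict Implicit. Unset Printing Implicit Defensive.
Import Order.TTheory GRing.Theory Num.Theory.
Local Open Scope ring_scope.

(* A 2-dimensional K-algebra is modelled as the vector space K^2 = 'rV[K]_2
   equipped with a multiplication [mul]; the algebra axioms (bilinearity)
   are stated as a hypothesis [bilinear2]. *)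
Definition bilinear2 (K : fieldType) (mul : 'rV[K]_2 -> 'rV[K]_2 -> 'rV[K]_2) :=
  (forall (a : K) x y z, mul (a *: x + y) z = a *: mul x z + mul y z) /\
  (forall (a : K) x y z, mul z (a *: x + y) = a *: mul z x + mul z y).

Definition is_evolution (K : fieldType) (mul : 'rV[K]_2 -> 'rV[K]_2 -> 'rV[K]_2) :=
  exists B : 'M[K]_2, B \in unitmx /\
    forall i j : 'I_2, i != j -> mul (row i B) (row j B) = 0.

(* Two-sided ideal, represented by its row space I (a subspace of K^2). *)
Definition is_ideal (K : fieldType) (mul : 'rV[K]_2 -> 'rV[K]_2 -> 'rV[K]_2)
  (I : 'M[K]_2) :=
  forall x y : 'rV[K]_2, (x <= I)%MS -> (mul x y <= I)%MS /\ (mul y x <= I)%MS.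

Definition is_simple (K : fieldType) (mul : 'rV[K]_2 -> 'rV[K]_2 -> 'rV[K]_2) :=
  (exists x y, mul x y != 0) /\
  forall I : 'M[K]_2, is_ideal mul I -> \rank I = 0%N \/ \rank I = 2%N.

(* Evolution algebra with natural basis the standard basis and structure
   matrix W: e_i^2 = \sum_j W j i e_j, e_i e_j = 0 (i<>j). In coordinates:
   (x y)_j = \sum_i W j i x_i y_i. *)
Definition evoMul (K : fieldType) (W : 'M[K]_2) (x y : 'rV[K]_2) : 'rV[K]_2 :=
  \row_(j < 2) \sum_(i < 2) W j i * x 0 i * y 0 i.

Definition mx2 (K : fieldType) (a b c d : K) : 'M[K]_2 :=
  \matrix_(i < 2, j < 2)
    if (i == 0 :> nat) then (if (j == 0 :> nat) then a else b)
    else (if (j == 0 :> nat) then c else d).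

Definition alg_iso (K : fieldType) (mul1 mul2 : 'rV[K]_2 -> 'rV[K]_2 -> 'rV[K]_2) :=
  exists P : 'M[K]_2, P \in unitmx /\
    forall x y, mul1 x y *m P = mul2 (x *m P) (y *m P).

Definition typeII02 (K : fieldType) (l : K) := evoMul (mx2 0 l 1 0).
Definition typeII13 (K : fieldType) (l : K) := evoMul (mx2 1 l 1 0).
Definition typeII24 (K : fieldType) (l m : K) := evoMul (mx2 1 l m 1).

From HB Require Import structures.
From mathcomp Require Import all_boot all_order all_algebra.
From mathcomp Require Import ring.

(* Over a natural basis the algebra becomes [evoMul W], W its structure matrix.
   Simplicity forces W to be invertible with nonzero off-diagonal entries:
   otherwise A^2 (the row space of W^T) or the line through a natural basis
   vector is a proper nonzero ideal.  Rescaling, and possibly swapping, the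
   natural basis brings W to type II^{0,2}, II^{1,3} or II^{2,4} according as
   0, 1 or 2 diagonal entries are nonzero.  This number is an isomorphism
   invariant: as W is invertible, e_1 e_2 = 0 forces an isomorphism to send
   natural basis vectors to multiples of natural basis vectors, and comparing
   squares matches the diagonal entries up to nonzero factors. *)
Set Implicit Arguments. Unset Strict Implicit. Unset Printing Implicit Defensive.
Import Order.TTheory GRing.Theory Num.Theory.
Local Open Scope ring_scope.

Local Notation i0 := (@ord0 1).
Local Notation i1 := (@ord_max 1).

Lemma ord2P (i : 'I_2) : i = i0 \/ i = i1.
Proof. by case: i => [[|[|//]] ?]; [left | right]; apply: val_inj. Qed.

Lemma big_ord2 (V : nmodType) (F : 'I_2 -> V) : \sum_(i < 2) F i = F i0 + F i1.
Proof. by rewrite big_ord_recl big_ord1; congr (_ + F _); apply: val_inj. Qed.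

Lemma mulmx2E (R : pzSemiRingType) m n (A : 'M[R]_(m, 2)) (C : 'M[R]_(2, n)) i j :
  (A *m C) i j = A i i0 * C i0 j + A i i1 * C i1 j.
Proof. by rewrite mxE big_ord2. Qed.

Lemma rowv2P (T : Type) (x y : 'rV[T]_2) : x 0 i0 = y 0 i0 -> x 0 i1 = y 0 i1 -> x = y.
Proof. by move=> e0 e1; apply/rowP => k; case: (ord2P k) => ->. Qed.

Lemma det_mx2 (R : comPzRingType) (A : 'M[R]_2) :
  \det A = A i0 i0 * A i1 i1 - A i0 i1 * A i1 i0.
Proof.
rewrite (expand_det_row _ i0) big_ord2 /cofactor !det_mx11 !mxE /=.
have -> : lift i0 0 = i1 by apply: val_inj.
have -> : lift i1 0 = i0 by apply: val_inj.
by rewrite expr0 mul1r expr1 mulN1r mulrN.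
Qed.

Section TwoDimensionalEvolutionAlgebras.
Variable K : fieldType.
Implicit Types (x y : 'rV[K]_2) (B P W : 'M[K]_2).
Local Notation product := ('rV[K]_2 -> 'rV[K]_2 -> 'rV[K]_2).

Lemma unitmx2E W : (W \in unitmx) = (W i0 i0 * W i1 i1 - W i0 i1 * W i1 i0 != 0).
Proof. by rewrite unitmxE unitfE det_mx2. Qed.

Lemma unitmx_mx2 (a b c d : K) : (mx2 a b c d \in unitmx) = (a * d - b * c != 0).
Proof. by rewrite unitmx2E !mxE. Qed.

Lemma bilinear2_scale (mul : product) : bilinear2 mul ->
  (forall a x y, mul (a *: x) y = a *: mul x y) /\
  (forall a x y, mul x (a *: y) = a *: mul x y).
Proof.
case=> linl linr.
have mul0x y : mul 0 y = 0.
  have := linl 1 0 0 y; rewrite scaler0 addr0 scale1r => h.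
  by apply: (@addIr _ (mul 0 y)); rewrite add0r -h.
have mulx0 x : mul x 0 = 0.
  have := linr 1 0 0 x; rewrite scaler0 addr0 scale1r => h.
  by apply: (@addIr _ (mul x 0)); rewrite add0r -h.
split=> a x y; first by have := linl a x 0 y; rewrite !addr0 mul0x addr0.
by have := linr a y 0 x; rewrite !addr0 mulx0 addr0.
Qed.

Lemma evoMulE W x y j :
  evoMul W x y 0 j = W j i0 * x 0 i0 * y 0 i0 + W j i1 * x 0 i1 * y 0 i1.
Proof. by rewrite mxE big_ord2. Qed.

Lemma evoMulC W x y : evoMul W x y = evoMul W y x.
Proof. by apply/rowP => j; rewrite !evoMulE ![_ * y 0 _]mulrC !mulrA. Qed.

Lemma evoMul_map2 W x y : evoMul W x y = map2_mx *%R x y *m W^T.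
Proof. by apply/rowP => j; rewrite evoMulE mulmx2E !mxE; ring. Qed.

Definition evo_struct_mx (mul : product) B : 'M[K]_2 :=
  \matrix_(j, i) (mul (row i B) (row i B) *m invmx B) 0 j.

Lemma evolution_iso_evoMul (mul : product) : bilinear2 mul -> is_evolution mul ->
  exists W, alg_iso mul (evoMul W).
Proof.
move=> bil [B [Bu natural]]; exists (evo_struct_mx mul B), (invmx B).
split=> [|x y]; first by rewrite unitmx_inv.
have [scalel scaler] := bilinear2_scale bil; case: bil => linl linr.
have coords z : z = (z *m invmx B) 0 i0 *: row i0 B + (z *m invmx B) 0 i1 *: row i1 B.
  by rewrite -[z in LHS](mulmxKV Bu z) mulmx_sum_row big_ord2.
rewrite [x in mul x]coords [y in mul _ y]coords.
rewrite !linl !linr !scalel !scaler (natural i0 i1) // (natural i1 i0) //.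
rewrite !scaler0 addr0 add0r mulmxDl -!scalemxAl.
by apply: rowv2P; rewrite !evoMulE !mxE; ring.
Qed.

Lemma alg_iso_sym (mul1 mul2 : product) : alg_iso mul1 mul2 -> alg_iso mul2 mul1.
Proof.
case=> P [Pu iso]; exists (invmx P); split=> [|x y]; first by rewrite unitmx_inv.
by rewrite -{1}(mulmxKV Pu x) -{1}(mulmxKV Pu y) -iso mulmxK.
Qed.

Lemma alg_iso_trans (mul1 mul2 mul3 : product) :
  alg_iso mul1 mul2 -> alg_iso mul2 mul3 -> alg_iso mul1 mul3.
Proof.
case=> P [Pu iso12] [Q [Qu iso23]]; exists (P *m Q).
by split=> [|x y]; rewrite ?unitmx_mul ?Pu // !mulmxA iso12 iso23.
Qed.

Definition ideals_trivial (mul : product) :=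
  forall I : 'M[K]_2, is_ideal mul I -> \rank I = 0%N \/ \rank I = 2%N.

Lemma alg_iso_ideals_trivial (mul1 mul2 : product) :
  alg_iso mul1 mul2 -> ideals_trivial mul1 -> ideals_trivial mul2.
Proof.
case=> P [Pu iso] triv I idealI.
rewrite -(mxrankMfree I (_ : row_free (invmx P))) ?row_free_unit ?unitmx_inv //.
apply: triv => x y xI.
have xPI : (x *m P <= I)%MS by rewrite -[I](mulmxKV Pu) submxMr.
have [xyI yxI] := idealI _ (y *m P) xPI.
by rewrite -(mulmxK Pu (mul1 x y)) -(mulmxK Pu (mul1 y x)) !iso !submxMr.
Qed.

Lemma evoMul_line_ideal W i :
  (forall j, j != i -> W j i = 0) -> is_ideal (evoMul W) <<'e_i : 'rV[K]_2>>%MS.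
Proof.
move=> Wi; set e : 'rV[K]_2 := 'e_i.
suff closed x y : (x <= e)%MS -> (evoMul W x y <= e)%MS.
  by move=> x y; rewrite !genmxE => xi; split; [|rewrite evoMulC]; apply: closed.
case/sub_rVP=> a ->; apply/sub_rVP; exists (W i i * a * y 0 i); apply/rowP => j.
rewrite !mxE (bigD1 i) //= big1 => [|k /negbTE ki]; last by rewrite !mxE ki mulr0 mulr0 mul0r.
rewrite !mxE !eqxx /= mulr1 addr0.
by case: eqVneq => [-> | /Wi ->]; rewrite ?mulr1 ?mulr0 ?mul0r.
Qed.

Lemma evoMul_square_ideal W : is_ideal (evoMul W) W^T.
Proof. by move=> x y _; rewrite !evoMul_map2 !submxMl. Qed.

Lemma evoMul_ideals_trivial W : ideals_trivial (evoMul W) ->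
  [/\ W \in unitmx, W i1 i0 != 0 & W i0 i1 != 0].
Proof.
move=> triv.
have offdiag i j : j != i -> W j i != 0.
  move=> ji; apply/eqP=> Wji.
  have /triv : is_ideal (evoMul W) <<'e_i : 'rV[K]_2>>%MS.
    apply: evoMul_line_ideal => k ki.
    (* in dimension two, [k != i] and [j != i] force [k = j] *)
    by case: (ord2P i) (ord2P j) (ord2P k) ji ki Wji => -> [] -> [] ->.
  by rewrite genmxE mxrank_delta => -[].
have W10 : W i1 i0 != 0 by apply: offdiag.
split=> //; last exact: offdiag.
rewrite -row_free_unit /row_free -mxrank_tr.
case: (triv _ (@evoMul_square_ideal W)) => [/eqP | -> //].
by rewrite mxrank_eq0 => /eqP/matrixP/(_ i0 i1); rewrite !mxE => /eqP; rewrite (negbTE W10).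
Qed.

Lemma evoMul_delta W i j :
  evoMul W 'e_i 'e_j = (i == j)%:R *: row i W^T.
Proof.
apply/rowP=> k; rewrite evoMulE !mxE.
by case: (ord2P i) (ord2P j) => -> [] ->; rewrite /= ?mulr1 ?mulr0 ?mul1r ?mul0r ?addr0 ?add0r.
Qed.

Lemma evoMul_unitmx_eq0 W x y :
  W \in unitmx -> evoMul W x y = 0 -> forall i, x 0 i * y 0 i = 0.
Proof.
rewrite evoMul_map2 -unitmx_tr => Wu /(canRL (mulmxK Wu)); rewrite mul0mx => /rowP xy i.
by have := xy i; rewrite !mxE.
Qed.

Lemma evoMul_iso_monomial W W' P : W' \in unitmx -> P \in unitmx ->
  (forall x y, evoMul W x y *m P = evoMul W' (x *m P) (y *m P)) ->
  [/\ P i0 i1 = 0, P i1 i0 = 0, P i0 i0 != 0 & P i1 i1 != 0] \/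
  [/\ P i0 i0 = 0, P i1 i1 = 0, P i0 i1 != 0 & P i1 i0 != 0].
Proof.
move=> W'u Pu iso.
have /(evoMul_unitmx_eq0 W'u) orth : evoMul W' (row i0 P) (row i1 P) = 0.
  by rewrite !rowE -iso evoMul_delta scale0r mul0mx.
move: (orth i0) (orth i1) Pu; rewrite unitmx2E !mxE.
move: (P i0 i0) (P i0 i1) (P i1 i0) (P i1 i1) => a b c d ac bd.
have [-> | a_nz] := eqVneq a 0.
  rewrite mul0r sub0r oppr_eq0 mulf_eq0 negb_or => /andP[b_nz c_nz].
  by right; split=> //; move/eqP: bd; rewrite mulf_eq0 (negbTE b_nz) => /eqP.
have c0 : c = 0 by move/eqP: ac; rewrite mulf_eq0 (negbTE a_nz) => /eqP.
rewrite c0 mulr0 subr0 mulf_eq0 negb_or => /andP[_ d_nz].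
by left; split=> //; move/eqP: bd; rewrite mulf_eq0 (negbTE d_nz) orbF => /eqP.
Qed.

Definition nz_diag_count W : nat := addn (W i0 i0 != 0) (W i1 i1 != 0).

Lemma nz_diag_count_mx2 (a b c d : K) :
  nz_diag_count (mx2 a b c d) = addn (a != 0) (d != 0).
Proof. by rewrite /nz_diag_count !mxE. Qed.

Lemma alg_iso_nz_diag_count W W' : W' \in unitmx ->
  alg_iso (evoMul W) (evoMul W') -> nz_diag_count W = nz_diag_count W'.
Proof.
move=> W'u [P [Pu iso]].
have square k j :
    W i0 k * P i0 j + W i1 k * P i1 j = W' j i0 * P k i0 ^+ 2 + W' j i1 * P k i1 ^+ 2.
  have := congr1 (fun v : 'rV_2 => v 0 j) (iso 'e_k 'e_k).
  rewrite evoMul_delta eqxx scale1r -!rowE mulmx2E evoMulE !mxE => ->.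
  by rewrite -!mulrA -!expr2.
have nz_iff (u v z : K) : z != 0 -> u * z = v * z ^+ 2 -> (u != 0) = (v != 0).
  by move=> z0 /(congr1 (eq_op^~ 0)) /=; rewrite !mulf_eq0 (negbTE z0) !orbF => ->.
rewrite /nz_diag_count.
case: (evoMul_iso_monomial W'u Pu iso)
  => [[p01 p10 p00_nz p11_nz] | [p00 p11 p01_nz p10_nz]].
- have e00 : W i0 i0 * P i0 i0 = W' i0 i0 * P i0 i0 ^+ 2.
    by have := square i0 i0; rewrite p01 p10 /= !(mulr0, expr0n, addr0).
  have e11 : W i1 i1 * P i1 i1 = W' i1 i1 * P i1 i1 ^+ 2.
    by have := square i1 i1; rewrite p01 p10 /= !(mulr0, expr0n, add0r).
  by rewrite (nz_iff _ _ _ p00_nz e00) (nz_iff _ _ _ p11_nz e11).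
- have e01 : W i0 i0 * P i0 i1 = W' i1 i1 * P i0 i1 ^+ 2.
    by have := square i0 i1; rewrite p00 p11 /= !(mulr0, expr0n, addr0, add0r).
  have e10 : W i1 i1 * P i1 i0 = W' i0 i0 * P i1 i0 ^+ 2.
    by have := square i1 i0; rewrite p00 p11 /= !(mulr0, expr0n, addr0, add0r).
  by rewrite (nz_iff _ _ _ p01_nz e01) (nz_iff _ _ _ p10_nz e10) addnC.
Qed.

Lemma alg_iso_evoMul_scale W (c0 c1 p q r s : K) : c0 != 0 -> c1 != 0 ->
  W i0 i0 = p * c0 -> W i0 i1 = q * c1 ^+ 2 / c0 ->
  W i1 i0 = r * c0 ^+ 2 / c1 -> W i1 i1 = s * c1 ->
  alg_iso (evoMul W) (evoMul (mx2 p q r s)).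
Proof.
move=> c0_nz c1_nz W00 W01 W10 W11; exists (mx2 c0 0 0 c1); split.
  by rewrite unitmx_mx2 mulr0 subr0 mulf_neq0.
move=> x y; apply: rowv2P; rewrite !mulmx2E !evoMulE !mulmx2E !mxE /= W00 W01 W10 W11;
  by field; rewrite c0_nz c1_nz.
Qed.

Lemma alg_iso_evoMul_swap W :
  alg_iso (evoMul W) (evoMul (mx2 (W i1 i1) (W i1 i0) (W i0 i1) (W i0 i0))).
Proof.
exists (mx2 0 1 1 0); split; first by rewrite unitmx_mx2 mulr0 mul1r sub0r oppr_eq0 oner_eq0.
by move=> x y; apply: rowv2P; rewrite !mulmx2E !evoMulE !mulmx2E !mxE /=; ring.
Qed.

Section NormalForms.
Variable W : 'M[K]_2.
Hypotheses (W01 : W i0 i1 != 0) (W10 : W i1 i0 != 0).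

Lemma evoMul_typeII02 : W i0 i0 = 0 -> W i1 i1 = 0 ->
  exists l, l != 0 /\ alg_iso (evoMul W) (typeII02 l).
Proof.
move=> W00 W11; exists (W i0 i1 * W i1 i0 ^+ 2); split; first by rewrite mulf_neq0 ?expf_neq0.
apply: (alg_iso_evoMul_scale (c0 := 1) (c1 := (W i1 i0)^-1));
  rewrite ?oner_neq0 ?invr_neq0 ?W00 ?W11 ?mul0r //; field; by rewrite oner_neq0 W10.
Qed.

Lemma evoMul_typeII13 : W i0 i0 != 0 -> W i1 i1 = 0 ->
  exists l, l != 0 /\ alg_iso (evoMul W) (typeII13 l).
Proof.
move=> W00 W11; exists (W i0 i1 * W i1 i0 ^+ 2 / W i0 i0 ^+ 3).
split; first by rewrite mulf_neq0 ?invr_neq0 ?mulf_neq0 ?expf_neq0.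
apply: (alg_iso_evoMul_scale (c0 := W i0 i0) (c1 := W i0 i0 ^+ 2 / W i1 i0));
  rewrite ?mulf_neq0 ?invr_neq0 ?expf_neq0 ?W11 ?mul0r //; field; by rewrite ?W00 ?W10.
Qed.

Lemma evoMul_typeII24 : W \in unitmx -> W i0 i0 != 0 -> W i1 i1 != 0 ->
  exists l m, [/\ l != 0, m != 0, l * m != 1 & alg_iso (evoMul W) (typeII24 l m)].
Proof.
move=> Wu W00 W11.
set l := W i0 i1 * W i0 i0 / W i1 i1 ^+ 2; set m := W i1 i0 * W i1 i1 / W i0 i0 ^+ 2.
exists l, m; split; rewrite ?mulf_neq0 ?invr_neq0 ?expf_neq0 //.
  have det_lm : W i0 i0 * W i1 i1 - W i0 i1 * W i1 i0 = W i0 i0 * W i1 i1 * (1 - l * m).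
    by rewrite /l /m; field; rewrite W00 W11.
  by move: Wu; rewrite unitmx2E det_lm; apply: contraNneq => ->; rewrite subrr mulr0.
apply: (alg_iso_evoMul_scale (c0 := W i0 i0) (c1 := W i1 i1)) => //;
  rewrite ?mul1r // /l /m; field; by rewrite ?W00 ?W11.
Qed.

End NormalForms.

Section Classification.
Variables (mul : product) (W : 'M[K]_2).
Hypotheses (isoW : alg_iso mul (evoMul W)) (Wu : W \in unitmx)
  (W01 : W i0 i1 != 0) (W10 : W i1 i0 != 0).

Lemma nz_diag_count_alg_iso W' :
  alg_iso mul (evoMul W') -> nz_diag_count W' = nz_diag_count W.
Proof.
by move=> iso'; apply: alg_iso_nz_diag_count Wu (alg_iso_trans (alg_iso_sym iso') isoW).
Qed.

Lemma typeII02_iff :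
  (exists l, l != 0 /\ alg_iso mul (typeII02 l)) <-> nz_diag_count W = 0%N.
Proof.
split=> [[l [_ /nz_diag_count_alg_iso <-]] | ].
  by rewrite nz_diag_count_mx2 !eqxx.
rewrite /nz_diag_count.
case: (eqVneq (W i0 i0) 0) => // W00; case: (eqVneq (W i1 i1) 0) => // W11 _.
have [l [l0 iso]] := evoMul_typeII02 W01 W10 W00 W11.
by exists l; split; last exact: alg_iso_trans isoW iso.
Qed.

Lemma typeII13_iff :
  (exists l, l != 0 /\ alg_iso mul (typeII13 l)) <-> nz_diag_count W = 1%N.
Proof.
split=> [[l [_ /nz_diag_count_alg_iso <-]] | ].
  by rewrite nz_diag_count_mx2 eqxx oner_eq0.
rewrite /nz_diag_count.
case: (eqVneq (W i0 i0) 0) => W00; case: (eqVneq (W i1 i1) 0) => //= W11 _.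
  have swapW := alg_iso_evoMul_swap W.
  have := @evoMul_typeII13 (mx2 (W i1 i1) (W i1 i0) (W i0 i1) (W i0 i0)).
  rewrite !mxE /= => /(_ W10 W01 W11 W00) [l [l0 iso]].
  by exists l; split; last exact: alg_iso_trans isoW (alg_iso_trans swapW iso).
have [l [l0 iso]] := evoMul_typeII13 W01 W10 W00 W11.
by exists l; split; last exact: alg_iso_trans isoW iso.
Qed.

Lemma typeII24_iff :
  (exists l m, [/\ l != 0, m != 0, l * m != 1 & alg_iso mul (typeII24 l m)]) <->
  nz_diag_count W = 2%N.
Proof.
split=> [[l [m [_ _ _ /nz_diag_count_alg_iso <-]]] | ].
  by rewrite nz_diag_count_mx2 oner_eq0.
rewrite /nz_diag_count.
case: (eqVneq (W i0 i0) 0) => // W00; case: (eqVneq (W i1 i1) 0) => // W11 _.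
have [l [m [l0 m0 lm iso]]] := evoMul_typeII24 W01 W10 Wu W00 W11.
by exists l, m; split; last exact: alg_iso_trans isoW iso.
Qed.

End Classification.

End TwoDimensionalEvolutionAlgebras.

Theorem theorem3p4 (K : fieldType) (mul : 'rV[K]_2 -> 'rV[K]_2 -> 'rV[K]_2) :
  bilinear2 mul -> is_evolution mul -> is_simple mul ->
  let T1 := exists l : K, l != 0 /\ alg_iso mul (typeII02 l) in
  let T2 := exists l : K, l != 0 /\ alg_iso mul (typeII13 l) in
  let T3 := exists l m : K, [/\ l != 0, m != 0, l * m != 1
                              & alg_iso mul (typeII24 l m)] in
  (T1 /\ ~ T2 /\ ~ T3) \/ (~ T1 /\ T2 /\ ~ T3) \/ (~ T1 /\ ~ T2 /\ T3).
Proof.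
move=> bil evo [_ triv] T1 T2 T3.
have [W isoW] := evolution_iso_evoMul bil evo.
have [Wu W10 W01] := evoMul_ideals_trivial (alg_iso_ideals_trivial isoW triv).
have T1E : T1 <-> nz_diag_count W = 0%N := typeII02_iff isoW Wu W01 W10.
have T2E : T2 <-> nz_diag_count W = 1%N := typeII13_iff isoW Wu W01 W10.
have T3E : T3 <-> nz_diag_count W = 2%N := typeII24_iff isoW Wu W01 W10.
have : (nz_diag_count W <= 2)%N := leq_add (leq_b1 _) (leq_b1 _).
case: (nz_diag_count W) T1E T2E T3E => [|[|[|//]]] T1E T2E T3E _.
- by left; split; [exact/T1E | split=> [/T2E | /T3E]].
- by right; left; split=> [/T1E // |]; split=> [|/T3E //]; exact/T2E.
- by right; right; split=> [/T1E // |]; split=> [/T2E // |]; exact/T3E.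
Qed.
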